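(* Let $d\ge1$, $\delta_1,\dots,\delta_d>0$, $0\le\kappa<1$, $\mathbf a=(a_1,\dots,a_d)\in(0,\infty)^d$ and $\mathbf t=(t_1,\dots,t_d)\in(0,\infty)^d$. Then $s(\mathbf t)=\hat s(\mathbf t)$, i.e. the minimum defining $s(\mathbf t)$ over $A\in\{a_i,a_i+t_i:1\le i\le d\}$ is already attained over $A\in\{a_i+t_i:1\le i\le d\}$.
   Context: For $A>0$ define $\mathcal K_1(A)=\{k:a_k\ge A\}$, $\mathcal K_2(A)=\{k:a_k+t_k\le A\}\setminus\mathcal K_1(A)$, $\mathcal K_3(A)=\{1,\dots,d\}\setminus(\mathcal K_1(A)\cup\mathcal K_2(A))$ and $$D(A)=\sum_{k\in\mathcal K_1(A)}\delta_k+\sum_{k\in\mathcal K_2(A)}\delta_k+\kappa\sum_{k\in\mathcal K_3(A)}\delta_k+(1-\kappa)\frac{\sum_{k\in\mathcal K_3(A)}a_k\delta_k-\sum_{k\in\mathcal K_2(A)}t_k\delta_k}{A}.$$ Then $s(\mathbf t)=\min\{D(A):A\in\{a_i,a_i+t_i:1\le i\le d\}\}$ and $\hat s(\mathbf t)=\min\{D(A):A\in\{a_i+t_i:1\le i\le d\}\}$. *)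

From HB Require Import structures.
From mathcomp Require Import all_boot all_order all_algebra.
Set Implicit Arguments. Unset Strict Implicit. Unset Printing Implicit Defensive.
Import Order.TTheory GRing.Theory Num.Theory.
Local Open Scope ring_scope.

Section Defs.
Variables (R : realFieldType) (d : nat).

Definition K1 (a : 'I_d -> R) (A : R) : {set 'I_d} := [set k | A <= a k].
Definition K2 (a t : 'I_d -> R) (A : R) : {set 'I_d} :=
  [set k | a k + t k <= A] :\: K1 a A.
Definition K3 (a t : 'I_d -> R) (A : R) : {set 'I_d} :=
  ~: (K1 a A :|: K2 a t A).

Definition Dfun (delta a t : 'I_d -> R) (kappa A : R) : R :=
  \sum_(k in K1 a A) delta k + \sum_(k in K2 a t A) delta k
  + kappa * \sum_(k in K3 a t A) delta k
  + (1 - kappa) *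
    ((\sum_(k in K3 a t A) a k * delta k - \sum_(k in K2 a t A) t k * delta k) / A).

(* Finite minimum of a list of reals, given a default for the empty list
   (only used on nonempty lists below). *)
Definition minlist (x0 : R) (s : seq R) : R := foldr Order.min x0 s.

Definition s_val (delta a t : 'I_d -> R) (kappa : R) (x0 : R) : R :=
  minlist x0 ([seq Dfun delta a t kappa (a i) | i <- enum 'I_d]
           ++ [seq Dfun delta a t kappa (a i + t i) | i <- enum 'I_d]).

Definition shat_val (delta a t : 'I_d -> R) (kappa : R) (x0 : R) : R :=
  minlist x0 [seq Dfun delta a t kappa (a i + t i) | i <- enum 'I_d].

End Defs.

From HB Require Import structures.
From mathcomp Require Import all_boot all_order all_algebra.
From mathcomp Require Import ring lra.
Set Implicit Arguments. Unset Strict Implicit. Unset Printing Implicit Defensive.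
Import Order.TTheory GRing.Theory Num.Theory.
Local Open Scope ring_scope.

(* For A > 0 the product A * D(A) equals
     H(A) = \sum_k delta_k * (kappa * A + (1 - kappa) * phi_k(A)),
   where phi_k(A) = min(A, a_k) for A <= a_k + t_k and A - t_k beyond:
   a clamp with slopes 1, 0, 1 that is concave on any interval not
   containing its second breakpoint a_k + t_k in its interior.
   Given a candidate A = a_i, let U be the smallest breakpoint a_j + t_j
   above a_i and L the largest breakpoint below a_i (or L = 0, where
   H(0) = 0).  No breakpoint lies in (L, U), so H is concave there and
   a_i * D(a_i) dominates the chord through (L, L * D(L)) and
   (U, U * D(U)).  Since the chord weights recombine to a_i * (U - L), this
   forces D(a_i) >= min(D(L), D(U)): every value D(a_i) is bounded below by
   some D(a_j + t_j).  Hence adding the values D(a_i) to the list of values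
   D(a_j + t_j) does not change its minimum, which is the theorem.
   The argument only needs delta_k >= 0 and kappa < 1. *)

Section Concavity.
Variable R : realFieldType.

Definition clamp (a t A : R) : R :=
  if A <= a then A else if a + t <= A then A - t else a.

Lemma clamp_chord (a t L x U : R) : 0 < t -> L <= x -> x <= U ->
  a + t <= L \/ U <= a + t ->
  (U - x) * clamp a t L + (x - L) * clamp a t U <= (U - L) * clamp a t x.
Proof.
move=> ht hLx hxU hc; rewrite /clamp.
case: (lerP x a) => h1; case: (lerP (a + t) x) => h2;
case: (lerP L a) => h3; case: (lerP (a + t) L) => h4;
case: (lerP U a) => h5; case: (lerP (a + t) U) => h6; case: hc => hc; nra.
Qed.

Lemma chord_perspective_min (L x U cL cU cx : R) :
  0 <= L -> 0 < x -> L <= x -> x <= U -> L < U ->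
  (U - x) * (L * cL) + (x - L) * (U * cU) <= (U - L) * (x * cx) ->
  Order.min cL cU <= cx.
Proof.
move=> hL hx hLx hxU hLU hchord; set m := Order.min cL cU.
have wL : (U - x) * (L * m) <= (U - x) * (L * cL).
  by rewrite ler_wpM2l ?subr_ge0 // ler_wpM2l // ge_min lexx.
have wU : (x - L) * (U * m) <= (x - L) * (U * cU).
  by rewrite ler_wpM2l ?subr_ge0 // ler_wpM2l ?ge_min ?lexx ?orbT //; lra.
have recombine : (U - x) * (L * m) + (x - L) * (U * m) = (U - L) * (x * m) by ring.
have : (U - L) * (x * m) <= (U - L) * (x * cx) by rewrite -recombine; lra.
by rewrite ler_pM2l ?subr_gt0 // ler_pM2l.
Qed.

Variable d : nat.
Variables (delta a t : 'I_d -> R) (kappa : R).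

Definition Hfun (A : R) : R :=
  \sum_k delta k * (kappa * A + (1 - kappa) * clamp (a k) (t k) A).

Lemma Hfun_Dfun (A : R) : 0 < A -> Hfun A = A * Dfun delta a t kappa A.
Proof.
move=> hA; rewrite /Dfun /Hfun !(big_mkcond (fun k => k \in _)) /=.
rewrite (eq_bigr (fun k => A * (if k \in K1 a A then delta k else 0)
  + A * (if k \in K2 a t A then delta k else 0)
  + (kappa * A) * (if k \in K3 a t A then delta k else 0)
  + (1 - kappa) * ((if k \in K3 a t A then a k * delta k else 0)
       - (if k \in K2 a t A then t k * delta k else 0)))).
  rewrite !big_split /= -!mulr_sumr sumrB; field; exact: lt0r_neq0.
move=> k _; rewrite /clamp /K3 /K2 /K1 !inE.
by case: (lerP A (a k)) => _ /=; case: (lerP (a k + t k) A) => _ /=; ring.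
Qed.

Lemma Hfun0 : (forall k, 0 < a k) -> Hfun 0 = 0.
Proof. by move=> ha; rewrite /Hfun big1 // => k _; rewrite /clamp (ltW (ha k)); ring. Qed.

Hypotheses (hdelta : forall k, 0 <= delta k) (hk1 : kappa < 1).
Hypothesis ht : forall k, 0 < t k.

Lemma Hfun_chord (L x U : R) : L <= x -> x <= U ->
  (forall k, a k + t k <= L \/ U <= a k + t k) ->
  (U - x) * Hfun L + (x - L) * Hfun U <= (U - L) * Hfun x.
Proof.
move=> hLx hxU hfree; rewrite /Hfun !mulr_sumr -big_split /=.
apply: ler_sum => k _.
have := clamp_chord (ht k) hLx hxU (hfree k).
set pL := clamp _ _ L; set pU := clamp _ _ U; set px := clamp _ _ x => hcl.
have wk : 0 <= delta k * (1 - kappa) by rewrite mulr_ge0 // subr_ge0 ltW.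
have split_gap : (U - L) * (delta k * (kappa * x + (1 - kappa) * px)) -
    ((U - x) * (delta k * (kappa * L + (1 - kappa) * pL)) +
     (x - L) * (delta k * (kappa * U + (1 - kappa) * pU))) =
    delta k * (1 - kappa) * ((U - L) * px - ((U - x) * pL + (x - L) * pU)) by ring.
by rewrite -subr_ge0 split_gap mulr_ge0 // subr_ge0.
Qed.

Lemma Dfun_ge_neighbours (L x U cL : R) :
  0 <= L -> 0 < x -> L <= x -> x <= U -> L < U ->
  (forall k, a k + t k <= L \/ U <= a k + t k) -> Hfun L = L * cL ->
  Order.min cL (Dfun delta a t kappa U) <= Dfun delta a t kappa x.
Proof.
move=> hL hx hLx hxU hLU hfree HL.
have hU : 0 < U by apply: lt_le_trans hxU.
apply: (chord_perspective_min hL hx hLx hxU hLU).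
by rewrite -HL -!Hfun_Dfun //; apply: Hfun_chord.
Qed.

Hypothesis ha : forall k, 0 < a k.

Lemma Dfun_bounded_by_breakpoint (i : 'I_d) :
  exists j, Dfun delta a t kappa (a j + t j) <= Dfun delta a t kappa (a i).
Proof.
have above_i : a i <= a i + t i by rewrite lerDl ltW.
have [j /= hj Umin] :=
  @arg_minP _ _ _ i (fun j => a i <= a j + t j) (fun j => a j + t j) above_i.
set U := a j + t j in hj Umin *.
case: (boolP [exists m, a m + t m < a i]) => [/existsP [m hm] | none_below].
- have [m' /= hm' Lmax] :=
    @arg_maxP _ _ _ m (fun m => a m + t m < a i) (fun m => a m + t m) hm.
  have hfree k : a k + t k <= a m' + t m' \/ U <= a k + t k.
    by case: (ltrP (a k + t k) (a i)) => hk; [left; apply: Lmax | right; apply: Umin].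
  have hL : 0 < a m' + t m' by rewrite addr_gt0.
  have := Dfun_ge_neighbours (ltW hL) (ha i) (ltW hm') hj (lt_le_trans hm' hj)
    hfree (Hfun_Dfun hL).
  by rewrite ge_min => /orP [hD | hD]; [exists m' | exists j].
- have hfree k : a k + t k <= 0 \/ U <= a k + t k.
    by right; apply: Umin; move/existsPn: none_below => /(_ k); rewrite -leNgt.
  have hU : 0 < U by apply: lt_le_trans hj.
  have H0 : Hfun 0 = 0 * Dfun delta a t kappa U by rewrite Hfun0 // mul0r.
  have := Dfun_ge_neighbours (lexx 0) (ha i) (ltW (ha i)) hj hU hfree H0.
  by rewrite minxx => hD; exists j.
Qed.

End Concavity.

Lemma foldr_min_le disp (T : orderType disp) (s : seq T) (x0 y : T) :
  y \in s -> (foldr Order.min x0 s <= y)%O.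
Proof.
elim: s => //= z s IH; rewrite inE => /orP [/eqP ->|hy].
  by rewrite ge_min lexx.
by rewrite ge_min IH ?orbT.
Qed.

Lemma foldr_min_lower disp (T : orderType disp) (s : seq T) (m : T) :
  (forall y, y \in s -> (m <= y)%O) -> foldr Order.min m s = m.
Proof.
elim: s => //= z s IH lb; rewrite IH => [|y hy]; last by apply: lb; rewrite inE hy orbT.
by apply: min_r; apply: lb; rewrite inE eqxx.
Qed.

Theorem mainTheorem5 (R : realFieldType) (d : nat) (hd : (0 < d)%N)
    (delta a t : 'I_d -> R) (kappa : R)
    (hdelta : forall k, 0 < delta k)
    (hk0 : 0 <= kappa) (hk1 : kappa < 1)
    (ha : forall k, 0 < a k) (ht : forall k, 0 < t k)
    (i0 : 'I_d) :
  let x0 := Dfun delta a t kappa (a i0 + t i0) in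
  s_val delta a t kappa x0 = shat_val delta a t kappa x0.
Proof.
move=> x0; rewrite /s_val /shat_val /minlist foldr_cat.
apply: foldr_min_lower => _ /mapP [i _ ->].
have [j hj] := Dfun_bounded_by_breakpoint (fun k => ltW (hdelta k)) hk1 ht ha i.
by apply: le_trans hj; apply/foldr_min_le/map_f; rewrite mem_enum.
Qed.
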